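(* Let $\mathbf K$ be a commutative field, $p,q\in\mathbb N$, and let $\tau:\mathcal M_p\to\mathcal M_q$ be a transducer. Then its transducer-matrix $M_\tau\in\mathbf K^{\mathcal M_{q\times p}}$ is a recurrence matrix (i.e. lies in $\mathrm{Rec}_{q\times p}(\mathbf K)$) if and only if $\tau$ is a finite-state transducer.
   Context: $\mathcal M_X$ denotes the free monoid on an alphabet $X$ and $\mathcal M_p$ the free monoid on $\{0,\dots,p-1\}$. For $A:\mathcal M_X\to Y$ the transducer $\tau_A:\mathcal M_X\to\mathcal M_Y$ is the length-preserving map with $\tau_A(\emptyset)=\emptyset$ and $\tau_A(u_1\dots u_n)=A[u_1u_2\dots u_n]A[u_2\dots u_n]\cdots A[u_{n-1}u_n]A[u_n]$; a transducer $\mathcal M_p\to\mathcal M_q$ is a map of the form $\tau_A$ with $A:\mathcal M_p\to\{0,\dots,q-1\}$, and it is finite-state if $A$ can be chosen automatic. A function $A:\mathcal M_X\to Y$ is automatic if there are a finite set $\mathcal V$, $v_*\in\mathcal V$, $\delta:\mathcal V\times X\to\mathcal V$ and $w:\mathcal V\to Y$ (with $X$ finite) such that $A[x_1\dots x_n]=w(v)$, $v$ obtained from $v_*$ by applying $\delta(\cdot,x_1),\dots,\delta(\cdot,x_n)$ successively. $\mathcal M_{q\times p}$ is the set of pairs $(U,W)$ of words of common length with $U$ over $\{0,\dots,q-1\}$, $W$ over $\{0,\dots,p-1\}$; the transducer-matrix of $\tau$ is $M_\tau[U,W]=1$ if $\tau(W)=U$ and $0$ otherwise. For $M:\mathcal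 M_{q\times p}\to\mathbf K$, $(\rho(S,T)M)[U,W]=M[US,WT]$, and $\mathrm{Rec}_{q\times p}(\mathbf K)$ is the set of $M$ with finite-dimensional span of $\{\rho(S,T)M\}$. *)

From mathcomp Require Import all_boot all_algebra.
Set Implicit Arguments. Unset Strict Implicit. Unset Printing Implicit Defensive.
Import GRing.Theory.
Local Open Scope ring_scope.

(* Words of the free monoid M_p are sequences over 'I_p = {0,...,p-1}. *)

Fixpoint tauA (p q : nat) (A : seq 'I_p -> 'I_q) (u : seq 'I_p) : seq 'I_q :=
  match u with
  | [::] => [::]
  | x :: u' => A (x :: u') :: tauA A u'
  end.

Definition is_transducer (p q : nat) (tau : seq 'I_p -> seq 'I_q) : Prop :=
  exists A : seq 'I_p -> 'I_q, tau =1 tauA A.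

Definition automatic (p : nat) (Y : Type) (A : seq 'I_p -> Y) : Prop :=
  exists (V : finType) (vstar : V) (delta : V -> 'I_p -> V) (w : V -> Y),
    forall x : seq 'I_p, A x = w (foldl delta vstar x).

Definition finite_state_transducer (p q : nat) (tau : seq 'I_p -> seq 'I_q) : Prop :=
  exists A : seq 'I_p -> 'I_q, automatic A /\ tau =1 tauA A.

(* Matrices indexed by M_{q x p}: functions on pairs (U, W); only pairs with
   size U = size W are meaningful (values elsewhere are ignored below). *)
Definition transducer_matrix (K : fieldType) (p q : nat)
  (tau : seq 'I_p -> seq 'I_q) : seq 'I_q -> seq 'I_p -> K :=
  fun U W => if tau W == U then 1 else 0.

Definition rho (K : Type) (p q : nat) (S : seq 'I_q) (T : seq 'I_p)
  (M : seq 'I_q -> seq 'I_p -> K) : seq 'I_q -> seq 'I_p -> K :=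
  fun U W => M (U ++ S) (W ++ T).

(* M in Rec_{q x p}(K): the span of { rho(S,T) M : (S,T) in M_{q x p} },
   as functions on M_{q x p}, is finite dimensional, i.e. contained in the
   span of finitely many functions g_0, ..., g_{n-1} on M_{q x p}. *)
Definition Rec (K : fieldType) (p q : nat) (M : seq 'I_q -> seq 'I_p -> K) : Prop :=
  exists (n : nat) (g : 'I_n -> seq 'I_q -> seq 'I_p -> K),
    forall (S : seq 'I_q) (T : seq 'I_p), size S = size T ->
      exists c : 'I_n -> K,
        forall (U : seq 'I_q) (W : seq 'I_p), size U = size W ->
          rho S T M U W = \sum_(i < n) c i * g i U W.

From mathcomp Require Import all_boot all_algebra.
From Stdlib Require Import Classical ClassicalEpsilon.
Set Implicit Arguments. Unset Strict Implicit. Unset Printing Implicit Defensive.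
Import GRing.Theory.
Local Open Scope ring_scope.

(* Write tau = tau_A and A_T for x |-> A (x ++ T). Since tau_A (W ++ T) =
   tau_{A_T} W ++ tau_A T, every row rho(S,T) M_tau is a 0/1 multiple of the
   indicator F_T of the graph of tau_{A_T}. If A is computed by an automaton,
   A_T only depends on the state transformer of T, so finitely many F_T span
   all rows. Conversely, functions in a finite-dimensional space are determined
   by their values at finitely many points, so F_T, and with it A_T on
   nonempty words, is determined by finitely many bits of T; adding A T gives
   a finite-index congruence on suffixes, from which an automaton computing A
   is built on the states "class of suffix -> output". *)

Section TestPoints.
Variables (K : fieldType) (Y : Type) (n : nat).

Lemma exists_spanning_points (g : Y -> 'rV[K]_n) :
  exists P : seq Y, forall y, (g y <= \sum_(z <- P) <<g z>>)%MS.
Proof.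
apply: NNPP => noSpan.
suff [P] : exists P : seq Y, (n < \rank (\sum_(z <- P) <<g z>>)%MS)%N.
  by rewrite ltnNge rank_leq_col.
elim: n.+1 => [|k [P leP]]; first by exists [::].
have [y gyNP] : exists y, ~ (g y <= \sum_(z <- P) <<g z>>)%MS.
  by apply: not_all_ex_not => spanP; apply: noSpan; exists P.
exists (y :: P); rewrite big_cons; apply: leq_ltn_trans leP (rank_ltmx _).
rewrite ltmxE addsmxSr; apply: contra_notN gyNP.
by rewrite addsmx_sub genmxE => /andP[].
Qed.

Lemma exists_test_points (g : 'I_n -> Y -> K) :
  exists m (P : 'I_m -> Y), forall c : 'I_n -> K,
    (forall j, \sum_i c i * g i (P j) = 0) -> forall y, \sum_i c i * g i y = 0.
Proof.
pose gv y : 'rV[K]_n := \row_i g i y.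
have gvE c y : (gv y *m \col_i c i) 0 0 = \sum_i c i * g i y.
  by rewrite mxE; apply: eq_bigr => i _; rewrite !mxE mulrC.
have [P spanP] := exists_spanning_points gv.
exists (size P), (tnth (in_tuple P)) => c cP y.
suff /sub_kermxP/matrixP/(_ 0 0) : (gv y <= kermx (\col_i c i))%MS.
  by rewrite gvE mxE.
apply: submx_trans (spanP y) _; rewrite big_tnth.
apply/sumsmx_subP => j _; rewrite genmxE.
apply/sub_kermxP/matrixP => i0 j0; rewrite !ord1 gvE mxE; exact: cP.
Qed.

End TestPoints.

Lemma Rec_test_points (K : fieldType) (p q : nat) (M : seq 'I_q -> seq 'I_p -> K) :
  Rec M -> exists m (P : 'I_m -> seq 'I_q * seq 'I_p),
    (forall j, size (P j).1 = size (P j).2) /\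
    forall S T S' T', size S = size T -> size S' = size T' ->
      (forall j, rho S T M (P j).1 (P j).2 = rho S' T' M (P j).1 (P j).2) ->
      forall U W, size U = size W -> rho S T M U W = rho S' T' M U W.
Proof.
case=> n [g spanM].
pose Y := {UW : seq 'I_q * seq 'I_p | size UW.1 == size UW.2}.
have [m [P testP]] := exists_test_points (fun i (y : Y) => g i (val y).1 (val y).2).
exists m, (fun j => val (P j)); split=> [j|S T S' T' eqST eqST' agreeP U W eqUW].
  exact/eqP/(valP (P j)).
have [c cE] := spanM S T eqST; have [c' c'E] := spanM S' T' eqST'.
have diffE (y : Y) : rho S T M (val y).1 (val y).2 - rho S' T' M (val y).1 (val y).2
    = \sum_i (c i - c' i) * g i (val y).1 (val y).2.
  by rewrite cE ?c'E ?(eqP (valP y)) // -sumrB; apply: eq_bigr => i _; rewrite mulrBl.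
apply/eqP; rewrite -subr_eq0; apply/eqP.
rewrite (diffE (exist _ (U, W) (introT eqP eqUW))) testP // => j.
by rewrite -diffE agreeP subrr.
Qed.

Section Automata.
Variable p : nat.

Lemma suffix_key_automatic (Y : finType) (A : seq 'I_p -> Y)
    (Q : finType) (key : seq 'I_p -> Q) :
  (forall T T', key T = key T' -> forall x, A (x ++ T) = A (x ++ T')) ->
  automatic A.
Proof.
move=> keyP.
pose rep k := epsilon (inhabits [::]) (fun T => key T = k).
have repP T x : A (x ++ rep (key T)) = A (x ++ T).
  by apply: keyP; apply: (epsilon_spec _ (fun T' => key T' = key T)); exists T.
pose delta (f : {ffun Q -> Y}) a : {ffun Q -> Y} := [ffun k => f (key (a :: rep k))].
have run x y : foldl delta [ffun k => A (x ++ rep k)] y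
               = [ffun k => A (x ++ y ++ rep k)].
  elim: y x => [|a y IH] x /=; first by [].
  have -> : delta [ffun k => A (x ++ rep k)] a = [ffun k => A (rcons x a ++ rep k)].
    by apply/ffunP => k; rewrite !ffunE repP cat_rcons.
  by rewrite IH; apply/ffunP => k; rewrite !ffunE cat_rcons.
exists {ffun Q -> Y}, [ffun k => A (rep k)], delta, (fun f : {ffun Q -> Y} => f (key [::])).
by move=> x; rewrite (run [::]) ffunE repP cats0.
Qed.

Variable q : nat.
Implicit Types (A : seq 'I_p -> 'I_q) (tau : seq 'I_p -> seq 'I_q).

Definition suffixed A (T : seq 'I_p) : seq 'I_p -> 'I_q := fun x => A (x ++ T).

Lemma size_tauA A W : size (tauA A W) = size W.
Proof. by elim: W => //= a W ->. Qed.

Lemma tauA_cat A W T : tauA A (W ++ T) = tauA (suffixed A T) W ++ tauA A T.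
Proof. by elim: W => //= a W ->. Qed.

Lemma eq_tauA A B : A =1 B -> tauA A =1 tauA B.
Proof. by move=> eqAB; elim=> //= a W ->; rewrite eqAB. Qed.

Lemma transducer_key_automatic A (Q : finType) (key : seq 'I_p -> Q) :
  (forall T T', key T = key T' -> tauA (suffixed A T) =1 tauA (suffixed A T')) ->
  automatic A.
Proof.
move=> keyP; apply: (@suffix_key_automatic _ A _ (fun T => (key T, A T))).
move=> T T' [/keyP tauE eqAT] [|a x] //.
by case: (tauE (a :: x)).
Qed.

Section TransducerMatrix.
Variable K : fieldType.

Lemma rho_transducer_matrix tau A S T U W :
  tau =1 tauA A -> size U = size W ->
  rho S T (transducer_matrix K tau) U W =
  (if tauA (suffixed A T) W == U then 1 else 0) * (if tauA A T == S then 1 else 0).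
Proof.
move=> tauE eqUW; rewrite /rho /transducer_matrix tauE tauA_cat.
rewrite eqseq_cat ?size_tauA //.
by case: (_ == U); case: (_ == S); rewrite /= ?mulr1 ?mulr0.
Qed.

Lemma Rec_of_finite_family (M : seq 'I_q -> seq 'I_p -> K)
    (Q : finType) (G : Q -> seq 'I_q -> seq 'I_p -> K) :
  (forall S T, size S = size T -> exists k a, forall U W, size U = size W ->
     rho S T M U W = a * G k U W) ->
  Rec M.
Proof.
move=> rowsM; exists #|Q|, (fun i => G (enum_val i)) => S T eqST.
have [k [a rowE]] := rowsM S T eqST.
exists (fun i => if i == enum_rank k then a else 0) => U W eqUW.
rewrite (bigD1 (enum_rank k)) //= big1 => [|i /negbTE->]; last by rewrite mul0r.
by rewrite eqxx enum_rankK addr0 rowE.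
Qed.

Lemma automatic_Rec tau A :
  automatic A -> tau =1 tauA A -> Rec (transducer_matrix K tau).
Proof.
case=> V [v0 [d [w autA]]] tauE.
pose out (f : {ffun V -> V}) x := w (f (foldl d v0 x)).
apply: (@Rec_of_finite_family _ _ (fun f U W => if tauA (out f) W == U then 1 else 0)).
move=> S T _; pose fT := [ffun v => foldl d v T].
have outE : suffixed A T =1 out fT.
  by move=> x; rewrite /suffixed /out ffunE autA foldl_cat.
exists fT, (if tauA A T == S then 1 else 0) => U W eqUW.
by rewrite (rho_transducer_matrix _ _ tauE) // mulrC (eq_tauA outE).
Qed.

Lemma Rec_transducer_key tau A :
  tau =1 tauA A -> Rec (transducer_matrix K tau) ->
  exists (Q : finType) (key : seq 'I_p -> Q),
    forall T T', key T = key T' -> tauA (suffixed A T) =1 tauA (suffixed A T').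
Proof.
move=> tauE /Rec_test_points [m [P [sizeP agreeP]]].
set M := transducer_matrix K tau.
have rowE T U W : size U = size W ->
    rho (tauA A T) T M U W = if tauA (suffixed A T) W == U then 1 else 0.
  by move=> eqUW; rewrite (rho_transducer_matrix _ _ tauE) // eqxx mulr1.
exists {ffun 'I_m -> bool}, (fun T => [ffun j => tauA (suffixed A T) (P j).2 == (P j).1]).
move=> T T' /ffunP keyE.
have agreeTT' U W : size U = size W ->
    rho (tauA A T) T M U W = rho (tauA A T') T' M U W.
  apply: agreeP; rewrite ?size_tauA // => j.
  by rewrite !rowE ?sizeP //; have := keyE j; rewrite !ffunE => ->.
move=> W; have := agreeTT' _ W (size_tauA (suffixed A T) W).
rewrite !rowE ?size_tauA // eqxx; case: eqP => [-> //|_ /eqP].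
by rewrite oner_eq0.
Qed.

End TransducerMatrix.
End Automata.

Theorem mainTheorem18 (K : fieldType) (p q : nat) (tau : seq 'I_p -> seq 'I_q) :
  is_transducer tau ->
  (Rec (transducer_matrix K tau) <-> finite_state_transducer tau).
Proof.
case=> A tauE; split=> [RecM | [A' [autA' tauE']]].
  have [Q [key keyP]] := Rec_transducer_key tauE RecM.
  by exists A; split; first exact: transducer_key_automatic keyP.
exact: automatic_Rec autA' tauE'.
Qed.
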